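(* Every $1$-Sperner hypergraph ${\cal H}=(V,{\cal E})$ with $V\neq\emptyset$ is $1$-decomposable, that is, it is the gluing of two $1$-Sperner hypergraphs.
   Context: A hypergraph ${\cal H}=(V,{\cal E})$ consists of a finite vertex set $V$ and a set ${\cal E}$ of subsets of $V$. It is $1$-Sperner if every two distinct hyperedges $e,f$ satisfy $\min\{|e\setminus f|,|f\setminus e|\}=1$. Given vertex-disjoint hypergraphs ${\cal H}_1=(V_1,{\cal E}_1)$, ${\cal H}_2=(V_2,{\cal E}_2)$ and a new vertex $z\notin V_1\cup V_2$, the gluing ${\cal H}_1\odot{\cal H}_2$ has vertex set $V_1\cup V_2\cup\{z\}$ and hyperedge set $\{\{z\}\cup e: e\in{\cal E}_1\}\cup\{V_1\cup e: e\in{\cal E}_2\}$. ${\cal H}$ is $z$-decomposable for a vertex $z$ if for all hyperedges $e,f$ with $z\in e\setminus f$ we have $e\setminus\{z\}\subseteq f$ (equivalently ${\cal H}$ is a gluing with new vertex $z$), and $1$-decomposable if it is $z$-decomposable for some vertex $z$. *)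

(* A hypergraph H = (V, E) is modelled by a finite type T
   (the vertex set V) together with E : {set {set T}} (the hyperedges). *)
From mathcomp Require Import all_boot.
Set Implicit Arguments. Unset Strict Implicit. Unset Printing Implicit Defensive.

Definition one_Sperner (T : finType) (E : {set {set T}}) : Prop :=
  forall e f, e \in E -> f \in E -> e != f ->
    minn #|e :\: f| #|f :\: e| = 1.

Definition z_decomposable (T : finType) (E : {set {set T}}) (z : T) : Prop :=
  forall e f, e \in E -> f \in E -> z \in e :\: f -> e :\ z \subset f.

Definition one_decomposable (T : finType) (E : {set {set T}}) : Prop :=
  exists z : T, z_decomposable E z.

From mathcomp Require Import all_boot.
From mathcomp Require Import zify.
Set Implicit Arguments. Unset Strict Implicit. Unset Printing Implicit Defensive.

(* Let m be a hyperedge of minimum size and M one of maximum size among the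
   others. Then m differs from every other hyperedge f in a single vertex, so
   m :\: M = [set z], and every hyperedge e through z satisfies e :\ z ⊆ M.
   If some e through z had a vertex y <> z outside a hyperedge f avoiding z,
   then |e :\: f| >= 2 forces f :\: e to be the single vertex of m :\: e,
   whence f ⊆ M while y ∈ M :\: f, contradicting the Sperner property. *)

Lemma setD_card1_subset (T : finType) (A B : {set T}) u :
  #|A :\: B| = 1 -> u \in A :\: B -> A :\ u \subset B.
Proof.
move=> /eqP/cards1P [v ABv]; rewrite ABv => /set1P ->.
apply/subsetP => y /setD1P [yv yA]; apply/negPn/negP => yB.
have : y \in A :\: B by apply/setDP.
by rewrite ABv inE (negbTE yv).
Qed.

Lemma card_setD_le (T : finType) (A B : {set T}) :
  #|A| <= #|B| -> #|A :\: B| <= #|B :\: A|.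
Proof. by move=> AB; rewrite !cardsD setIC leq_sub2r. Qed.

Section OneSperner.

Variables (T : finType) (E : {set {set T}}).
Hypothesis sperE : one_Sperner E.

Lemma one_Sperner_card_setD e f :
  e \in E -> f \in E -> e != f -> #|e| <= #|f| -> #|e :\: f| = 1.
Proof.
move=> eE fE ef /card_setD_le le_ef.
by have := sperE eE fE ef; lia.
Qed.

Lemma one_Sperner_card_setD_gt1 e f :
  e \in E -> f \in E -> 1 < #|e :\: f| -> #|f :\: e| = 1.
Proof.
move=> eE fE gt1_ef.
have ef : e != f by apply: contraTneq gt1_ef => ->; rewrite setDv cards0.
by have := sperE eE fE ef; lia.
Qed.

Lemma one_Sperner_subset e f : e \in E -> f \in E -> e \subset f -> e = f.
Proof.
move=> eE fE; rewrite -setD_eq0 => /eqP ef0; apply/eqP; apply: contraT => ef.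
by have := sperE eE fE ef; rewrite ef0 cards0 min0n.
Qed.

Section MinMaxEdges.

Variables (m M : {set T}) (z : T).
Hypotheses (mE : m \in E) (m_min : forall f, f \in E -> #|m| <= #|f|).
Hypotheses (ME : M \in E :\ m) (M_max : forall f, f \in E :\ m -> #|f| <= #|M|).
Hypothesis mM : m :\: M = [set z].

Let zmM : z \in m :\: M. Proof. by rewrite mM set11. Qed.

Lemma min_edge_setD1_subset f : f \in E -> z \notin f -> m :\ z \subset f.
Proof.
move=> fE zf; have /setDP [zm _] := zmM.
apply: setD_card1_subset; last exact/setDP.
by apply: one_Sperner_card_setD => //; [apply: contraNneq zf => <- | apply: m_min].
Qed.

Lemma edge_setD1_subset_max e : e \in E -> z \in e -> e :\ z \subset M.
Proof.
move=> eE ze; have /setD1P [_ M_E] := ME; have /setDP [_ zM] := zmM.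
have [-> | em] := eqVneq e m; first by apply: setD_card1_subset zmM; rewrite mM cards1.
apply: setD_card1_subset; last exact/setDP.
apply: one_Sperner_card_setD => //; first by apply: contraTneq ze => ->.
exact/M_max/setD1P.
Qed.

Lemma z_decomposable_min_max : z_decomposable E z.
Proof.
move=> e f eE fE /setDP [ze zf]; apply/subsetP => y /setD1P [yz ye].
apply/negPn/negP => yf; have /setDP [zm _] := zmM.
have sub_mf := min_edge_setD1_subset fE zf.
have em : e != m by apply: contraNneq yf => em; apply/(subsetP sub_mf)/setD1P; rewrite -em.
have me1 : #|m :\: e| = 1.
  by apply: one_Sperner_card_setD => //; [rewrite eq_sym | apply: m_min].
have /card_gt0P [a /setDP [am ae]] : 0 < #|m :\: e| by rewrite me1.
have az : a != z by apply: contraNneq ae => ->.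
have af : a \in f by apply/(subsetP sub_mf)/setD1P.
have fe1 : #|f :\: e| = 1.
  apply: one_Sperner_card_setD_gt1 => //.
  have /subset_leq_card : [set z; y] \subset e :\: f.
    by apply/subsetP => w /set2P [] ->; apply/setDP.
  by rewrite cards2 eq_sym yz.
have fM : f \subset M.
  apply/subsetP => w wf; case we: (w \in e).
    apply/(subsetP (edge_setD1_subset_max eE ze))/setD1P; split=> //.
    by apply: contraNneq zf => <-.
  have [-> | wa] := eqVneq w a.
    exact/(subsetP (edge_setD1_subset_max mE zm))/setD1P.
  have afe : a \in f :\: e by apply/setDP.
  by have := subsetP (setD_card1_subset fe1 afe) w; rewrite !inE wa wf we => /(_ isT).
have /setD1P [_ M_E] := ME.
have yM : y \in M by apply/(subsetP (edge_setD1_subset_max eE ze))/setD1P.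
by move: yf; rewrite (one_Sperner_subset fE M_E fM) yM.
Qed.

End MinMaxEdges.

End OneSperner.

Lemma z_decomposable_sub1 (T : finType) (E : {set {set T}}) m z :
  E \subset [set m] -> z_decomposable E z.
Proof.
by move=> /subsetP Em e f /Em /set1P -> /Em /set1P ->; rewrite setDv inE.
Qed.

Theorem theorem9 (T : finType) (E : {set {set T}}) :
  0 < #|T| -> one_Sperner E -> one_decomposable E.
Proof.
move=> /card_gt0P [t _] sperE.
have [-> | [m0 m0E]] := set_0Vmem E.
  by exists t; apply: (z_decomposable_sub1 (m := set0)); rewrite sub0set.
have [m mE m_min] := arg_minnP (fun s : {set T} => #|s|) m0E.
have [Em0 | [M0 M0E]] := set_0Vmem (E :\ m).
  by exists t; apply: (z_decomposable_sub1 (m := m)); rewrite -setD_eq0 Em0.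
have [M ME M_max] := arg_maxnP (fun s : {set T} => #|s|) M0E.
have /cards1P [z mM] : #|m :\: M| == 1.
  have /setD1P [Mm M_E] := ME.
  apply/eqP; apply: (one_Sperner_card_setD sperE) => //.
    by rewrite eq_sym.
  exact: m_min.
by exists z; exact: (z_decomposable_min_max sperE mE m_min ME M_max mM).
Qed.
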